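(* Consider the networked SVIRS system below on a connected weighted undirected graph, with parameters $N>0$, $0<r<1$, $\mu>0$, $0\le p\le 1$, $\beta>0$, $\xi\ge 0$, $\eta\ge 0$, $0\le\sigma\le 1$, $\gamma\ge 0$, $0<\epsilon\le 1$. If $\mathcal{R}_0>1$, then the system has a unique spatially constant equilibrium $\mathbf{E}=(S_*,V_*,I_*,R_* )$ with $I_*>0$ (the endemic equilibrium).
   Context: Let $G=\langle \mathcal V,\mathcal E,\mathcal W\rangle$ be a connected weighted undirected graph without self-loops, $|\mathcal V|=n$, with weights $w(x,y)=w(y,x)>0$ for adjacent nodes $x\sim y$. For $F:\mathcal V\to\mathbb R$ define $\Delta F(x)=\sum_{y\in\mathcal V,\,y\sim x} w(x,y)\,[F(y)-F(x)]$. The SVIRS model is, for $(x,t)\in\mathcal V\times[0,\infty)$, $\frac{dS}{dt}-\epsilon\Delta S=\mu(1-r)N-(\mu+p)S-\beta SI+\xi V+\eta R$, $\frac{dV}{dt}-\epsilon\Delta V=\mu rN+pS-\beta\sigma VI-(\mu+\xi)V$, $\frac{dI}{dt}-\epsilon\Delta I=\beta SI+\beta\sigma VI-(\mu+\gamma)I$, $\frac{dR}{dt}-\epsilon\Delta R=\gamma I-(\mu+\eta)R$, with $S,V,I,R:\mathcal V\times[0,\infty)\to\mathbb R$. A spatially constant equilibrium is a constant (in $x$ and $t$) solution; for such, $\Delta$ of each component vanishes. The basic reproduction number is $\mathcal R_0=\dfrac{\beta\big((\xi+(1-r)\mu)+\sigma(p+\mu r)\big)N}{(\gamma+\mu)(\mu+p+\xi)}$.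 *)

From HB Require Import structures.
From mathcomp Require Import all_boot all_order all_algebra.
From mathcomp Require Import all_classical all_reals all_analysis.
Set Implicit Arguments. Unset Strict Implicit. Unset Printing Implicit Defensive.
Import Order.TTheory GRing.Theory Num.Theory.
Local Open Scope ring_scope.

Definition weighted_graph (R : realType) (T : finType) (adj : rel T) (w : T -> T -> R) :=
  [/\ irreflexive adj, symmetric adj,
      (forall x y, w x y = w y x) & (forall x y, adj x y -> 0 < w x y)].

Definition graph_connected (T : finType) (adj : rel T) :=
  (0 < #|T|)%N /\ forall x y, connect adj x y.

Definition graph_laplacian (R : realType) (T : finType) (adj : rel T) (w : T -> T -> R)
  (F : T -> R) (x : T) : R :=
  \sum_(y | adj x y) w x y * (F y - F x).

Definition SVIRS_solution (R : realType) (T : finType) (adj : rel T) (w : T -> T -> R)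
  (N r mu p beta xi eta sigma gamma eps : R) (S V I Rc : T -> R -> R) : Prop :=
  forall (x : T) (t : R), 0 <= t ->
  [/\ derivable (S x) t 1, derivable (V x) t 1, derivable (I x) t 1 & derivable (Rc x) t 1] /\
  [/\     derive1 (S x) t - eps * graph_laplacian adj w (fun y => S y t) x
      = mu * (1 - r) * N - (mu + p) * S x t - beta * S x t * I x t + xi * V x t + eta * Rc x t,
    derive1 (V x) t - eps * graph_laplacian adj w (fun y => V y t) x
      = mu * r * N + p * S x t - beta * sigma * V x t * I x t - (mu + xi) * V x t,
    derive1 (I x) t - eps * graph_laplacian adj w (fun y => I y t) x
      = beta * S x t * I x t + beta * sigma * V x t * I x t - (mu + gamma) * I x t
    & derive1 (Rc x) t - eps * graph_laplacian adj w (fun y => Rc y t) x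
      = gamma * I x t - (mu + eta) * Rc x t].

Definition const_equilibrium (R : realType) (T : finType) (adj : rel T) (w : T -> T -> R)
  (N r mu p beta xi eta sigma gamma eps : R) (s v i rr : R) : Prop :=
  SVIRS_solution adj w N r mu p beta xi eta sigma gamma eps
    (fun _ _ => s) (fun _ _ => v) (fun _ _ => i) (fun _ _ => rr).

Definition R0 (R : realType) (N r mu p beta xi sigma gamma : R) : R :=
  beta * ((xi + (1 - r) * mu) + sigma * (p + mu * r)) * N
  / ((gamma + mu) * (mu + p + xi)).

(** At a spatially constant state the Laplacian terms vanish, so constant
    equilibria are the equilibria of the SVIRS ODE.  If [I > 0], the
    infection equation forces [beta (S + sigma V) = mu + gamma]; then the
    vaccination and recovery equations express [V], [S] and [R] as rational
    functions of [I], and summing all four equations shows that the total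
    population is [N].  After clearing a positive denominator this conservation
    law becomes a quadratic [A I^2 + B I + C = 0] with [A >= 0] and
    [C < 0] exactly when [R0 > 1]; such a quadratic has exactly one positive
    root. *)
From HB Require Import structures.
From mathcomp Require Import all_boot all_order all_algebra.
From mathcomp Require Import all_classical all_reals all_analysis.
From mathcomp Require Import ring lra.
Import Order.TTheory GRing.Theory Num.Theory.
Local Open Scope ring_scope.

Lemma quadratic_pos_root_uniq {R : realFieldType} {A B C x y : R} :
  0 <= A -> C < 0 -> 0 < x -> 0 < y ->
  A * x ^+ 2 + B * x + C = 0 -> A * y ^+ 2 + B * y + C = 0 -> x = y.
Proof.
move=> A_ge0 C_lt0 x_gt0 y_gt0 qx qy.
have : (x - y) * (A * x * y - C) = y * (A * x ^+ 2 + B * x + C) - x * (A * y ^+ 2 + B * y + C).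
  by ring.
rewrite qx qy !mulr0 subr0 => /eqP.
have : 0 < A * x * y - C by have := mulr_ge0 (mulr_ge0 A_ge0 (ltW x_gt0)) (ltW y_gt0); lra.
by rewrite mulf_eq0 subr_eq0 => /gt_eqF-> /orP[/eqP|].
Qed.

Lemma quadratic_pos_root_exists {R : rcfType} {A B C : R} :
  0 <= A -> C < 0 -> 0 < A \/ 0 < B ->
  exists2 x, 0 < x & A * x ^+ 2 + B * x + C = 0.
Proof.
move=> A_ge0 C_lt0 AB_gt0.
set d := Num.sqrt (B ^+ 2 - 4 * A * C).
have d2 : d ^+ 2 = B ^+ 2 - 4 * A * C by rewrite sqr_sqrtr //; nra.
have d_ge0 : 0 <= d by exact: sqrtr_ge0.
have Bd_gt0 : 0 < B + d.
  case: AB_gt0 => [A_gt0|]; last by lra.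
  have : B ^+ 2 < d ^+ 2 by rewrite d2; nra.
  nra.
(* the root [(-B + d) / (2 A)], written so that it also makes sense for [A = 0] *)
exists (- (2 * C) / (B + d)); first by apply: divr_gt0; lra.
have Bd_neq0 : B + d != 0 by rewrite gt_eqF.
have : (A * (- (2 * C) / (B + d)) ^+ 2 + B * (- (2 * C) / (B + d)) + C) * (B + d) ^+ 2
       = C * (4 * A * C - B ^+ 2 + d ^+ 2) by field.
rewrite d2 (_ : 4 * A * C - _ + _ = 0) ?mulr0 => [/eqP|]; last by ring.
by rewrite mulf_eq0 expf_eq0 (negPf Bd_neq0) andbF orbF => /eqP.
Qed.

Definition svirs_steady {R : pzRingType} (N r mu p beta xi eta sigma gamma s v i rr : R) :=
  [/\ mu * (1 - r) * N - (mu + p) * s - beta * s * i + xi * v + eta * rr = 0,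
      mu * r * N + p * s - beta * sigma * v * i - (mu + xi) * v = 0,
      beta * s * i + beta * sigma * v * i - (mu + gamma) * i = 0
    & gamma * i - (mu + eta) * rr = 0].

Lemma const_equilibriumP {R : realType} {T : finType} {adj : rel T} {w : T -> T -> R}
    {N r mu p beta xi eta sigma gamma eps s v i rr : R} (x0 : T) :
  const_equilibrium adj w N r mu p beta xi eta sigma gamma eps s v i rr <->
  svirs_steady N r mu p beta xi eta sigma gamma s v i rr.
Proof.
have laplacian_cst (c : R) x : graph_laplacian adj w (fun=> c) x = 0.
  by rewrite /graph_laplacian big1 // => y _; rewrite subrr mulr0.
have derive1_fun_cst (c t : R) : derive1 (fun=> c) t = 0 by exact: derive1_cst.
split.
- move=> /(_ x0 0 (lexx 0)) [_].
  rewrite !derive1_fun_cst !laplacian_cst mulr0 subr0.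
  by case=> e1 e2 e3 e4; split.
- case=> e1 e2 e3 e4 x t _; split; first by split; exact: derivable_cst.
  by rewrite !derive1_fun_cst !laplacian_cst mulr0 subr0.
Qed.

Section EndemicSteadyState.

Context {R : realType} {N r mu p beta xi eta sigma gamma : R}.
Hypotheses (mu_gt0 : 0 < mu) (beta_gt0 : 0 < beta) (p_ge0 : 0 <= p) (xi_ge0 : 0 <= xi)
  (eta_ge0 : 0 <= eta) (sigma_ge0 : 0 <= sigma) (gamma_ge0 : 0 <= gamma).

Local Notation steady := (svirs_steady N r mu p beta xi eta sigma gamma).

Let a := mu + gamma.
Let c := mu + xi + p * sigma.
Let M := mu * r * N + p * a / beta.
Let den i := beta * sigma * i + c.
Let v_of i := M / den i.
Let s_of i := a / beta - sigma * v_of i.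
Let rr_of i := gamma * i / (mu + eta).

Let k := 1 + gamma / (mu + eta).
Let A := k * beta * sigma.
Let B := k * c - (N - a / beta) * beta * sigma.
Let C := (1 - sigma) * M - (N - a / beta) * c.
Let q i := A * i ^+ 2 + B * i + C.

Let c_gt0 : 0 < c.
Proof. by have := mulr_ge0 p_ge0 sigma_ge0; rewrite /c; move: mu_gt0 xi_ge0; lra. Qed.

Let den_gt0 {i : R} : 0 <= i -> 0 < den i.
Proof.
move=> i_ge0; have := mulr_ge0 (mulr_ge0 (ltW beta_gt0) sigma_ge0) i_ge0.
by rewrite /den; have := c_gt0; lra.
Qed.

Let den_neq0 {i : R} : 0 <= i -> den i != 0.
Proof. by move/den_gt0; rewrite lt0r => /andP[]. Qed.

Let mu_eta_gt0 : 0 < mu + eta.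
Proof. by move: mu_gt0 eta_ge0; lra. Qed.

Let mu_eta_neq0 : mu + eta != 0.
Proof. by rewrite gt_eqF. Qed.

Let beta_neq0 : beta != 0.
Proof. by rewrite gt_eqF. Qed.

Lemma steady_total {s v i rr : R} : steady s v i rr -> s + v + i + rr = N.
Proof.
case=> e1 e2 e3 e4.
have : mu * (s + v + i + rr - N) = 0 by lra.
by move/eqP; rewrite mulf_eq0 (gt_eqF mu_gt0) subr_eq0 => /eqP.
Qed.

Let total_of_param {i : R} : 0 <= i -> s_of i + v_of i + i + rr_of i - N = q i / den i.
Proof.
move=> /den_neq0; rewrite /s_of /v_of /rr_of /q /A /B /C /k /M /den => den_i_neq0.
by field; rewrite beta_neq0 mu_eta_neq0 den_i_neq0.
Qed.

Let steady_endemic_param {s v i rr : R} : steady s v i rr -> 0 < i ->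
  [/\ s = s_of i, v = v_of i, rr = rr_of i & q i = 0].
Proof.
move=> st i_gt0; have [e1 e2 e3 e4] := st.
have i_neq0 : i != 0 by rewrite gt_eqF.
have threshold : beta * s + beta * sigma * v = a.
  apply: (mulfI i_neq0); rewrite /a; lra.
have s_eq_of_v : s = a / beta - sigma * v by rewrite -threshold; field.
have v_eq : v = v_of i.
  apply: (mulIf (den_neq0 (ltW i_gt0))); rewrite mulfVK ?den_neq0 ?(ltW i_gt0) //.
  by move: e2; rewrite s_eq_of_v /den /M /c => e2; lra.
have rr_eq : rr = rr_of i.
  by apply: (mulIf mu_eta_neq0); rewrite mulfVK //; lra.
have s_eq : s = s_of i by rewrite s_eq_of_v v_eq.
split=> //; apply/eqP.
have := total_of_param (ltW i_gt0); rewrite -s_eq -v_eq -rr_eq (steady_total st) subrr.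
by move/esym/eqP; rewrite mulf_eq0 invr_eq0 (negPf (den_neq0 (ltW i_gt0))) orbF.
Qed.

Let steady_of_root {i : R} : 0 <= i -> q i = 0 -> steady (s_of i) (v_of i) i (rr_of i).
Proof.
move=> i_ge0 qi.
have total : mu * (s_of i + v_of i + i + rr_of i - N) = 0.
  by rewrite total_of_param // qi mul0r mulr0.
have e2 : mu * r * N + p * s_of i - beta * sigma * v_of i * i - (mu + xi) * v_of i = 0.
  move: (den_neq0 i_ge0); rewrite /s_of /v_of /den /M /c => den_i_neq0.
  by field; rewrite beta_neq0 den_i_neq0.
have e3 : beta * s_of i * i + beta * sigma * v_of i * i - (mu + gamma) * i = 0.
  by rewrite /s_of /a; field.
have e4 : gamma * i - (mu + eta) * rr_of i = 0 by rewrite /rr_of; field.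
split=> //.
move: total e2 e3 e4; generalize (s_of i) (v_of i) (rr_of i) => s v rr; lra.
Qed.

Let k_gt0 : 0 < k.
Proof. by rewrite /k; have := divr_ge0 gamma_ge0 (ltW mu_eta_gt0); lra. Qed.

Let A_ge0 : 0 <= A.
Proof. by rewrite /A !mulr_ge0 // ltW. Qed.

Let A_or_B_gt0 : 0 < A \/ 0 < B.
Proof.
rewrite /A /B; have [->|sigma_neq0] := eqVneq sigma 0.
  by right; rewrite mulr0 subr0 mulr_gt0.
by left; rewrite !mulr_gt0 // lt0r sigma_neq0.
Qed.

Let C_lt0_of_R0_gt1 : 1 < R0 N r mu p beta xi sigma gamma -> C < 0.
Proof.
have R0_den_gt0 : 0 < (gamma + mu) * (mu + p + xi).
  by apply: mulr_gt0; move: mu_gt0 gamma_ge0 p_ge0 xi_ge0; lra.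
rewrite /R0 ltr_pdivlMr // mul1r => R0_gt1.
have -> : C = ((gamma + mu) * (mu + p + xi)
               - beta * ((xi + (1 - r) * mu) + sigma * (p + mu * r)) * N) / beta.
  by rewrite /C /M /a /c; field.
by rewrite pmulr_llt0 ?invr_gt0 // subr_lt0.
Qed.

Lemma exists_unique_endemic_steady_state : 1 < R0 N r mu p beta xi sigma gamma ->
  exists s v i rr, [/\ steady s v i rr, 0 < i &
    forall s' v' i' rr', steady s' v' i' rr' -> 0 < i' -> (s', v', i', rr') = (s, v, i, rr)].
Proof.
move=> /C_lt0_of_R0_gt1 C_lt0.
have [i i_gt0 qi] := quadratic_pos_root_exists A_ge0 C_lt0 A_or_B_gt0.
exists (s_of i), (v_of i), i, (rr_of i).
split=> [|//|s' v' i' rr' st' i'_gt0]; first exact: steady_of_root (ltW i_gt0) qi.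
have [-> -> -> qi'] := steady_endemic_param st' i'_gt0.
by rewrite (quadratic_pos_root_uniq A_ge0 C_lt0 i'_gt0 i_gt0 qi' qi).
Qed.

End EndemicSteadyState.

Theorem mainTheorem1 (R : realType) (T : finType) (adj : rel T) (w : T -> T -> R)
  (N r mu p beta xi eta sigma gamma eps : R) :
  weighted_graph adj w -> graph_connected adj ->
  0 < N -> 0 < r < 1 -> 0 < mu -> 0 <= p <= 1 -> 0 < beta -> 0 <= xi -> 0 <= eta ->
  0 <= sigma <= 1 -> 0 <= gamma -> 0 < eps <= 1 ->
  1 < R0 N r mu p beta xi sigma gamma ->
  exists s v i rr : R,
    [/\ const_equilibrium adj w N r mu p beta xi eta sigma gamma eps s v i rr, 0 < i &
      forall s' v' i' rr' : R,
        const_equilibrium adj w N r mu p beta xi eta sigma gamma eps s' v' i' rr' ->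
        0 < i' -> (s', v', i', rr') = (s, v, i, rr)].
Proof.
move=> _ [/card_gt0P[x0 _] _] _ _ mu_gt0 /andP[p_ge0 _] beta_gt0 xi_ge0 eta_ge0
  /andP[sigma_ge0 _] gamma_ge0 _ R0_gt1.
have [s [v [i [rr [st i_gt0 st_uniq]]]]] := exists_unique_endemic_steady_state
  mu_gt0 beta_gt0 p_ge0 xi_ge0 eta_ge0 sigma_ge0 gamma_ge0 R0_gt1.
exists s, v, i, rr; split=> // [|s' v' i' rr' /(const_equilibriumP x0)].
  exact/(const_equilibriumP x0).
exact: st_uniq.
Qed.
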